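(* Let $T$ be a tournament with $n$ vertices and $t$ directed triangles, where $3t\geq n$. Then $$\alpha(T)\geq \frac{2}{3}\,n\sqrt{\frac{n}{3t}}.$$
   Context: A tournament is an orientation of a complete graph. A directed triangle is a directed cycle of length $3$. A subset $S\subseteq V(T)$ is acyclic if $T[S]$ contains no directed cycle; $\alpha(T)$ is the maximum size of an acyclic subset of $V(T)$. *)

From mathcomp Require Import all_boot.
From Stdlib Require Import Reals ClassicalDescription.
Set Implicit Arguments. Unset Strict Implicit. Unset Printing Implicit Defensive.

Definition is_tournament (V : finType) (E : rel V) : Prop :=
  (forall x, ~~ E x x) /\
  (forall x y, x != y -> (E x y && ~~ E y x) || (E y x && ~~ E x y)).

Definition directed_cycle (V : finType) (E : rel V) (s : seq V) : bool :=
  [&& s != [::], uniq s & cycle E s].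

Definition acyclic_set (V : finType) (E : rel V) (S : {set V}) : Prop :=
  forall s : seq V, all (fun v => v \in S) s -> ~~ directed_cycle E s.

Definition acyclic_setb (V : finType) (E : rel V) (S : {set V}) : bool :=
  if excluded_middle_informative (acyclic_set E S) then true else false.

Definition alpha (V : finType) (E : rel V) : nat :=
  \max_(S : {set V} | acyclic_setb E S) #|S|.

Definition is_dtriangle (V : finType) (E : rel V) (A : {set V}) : bool :=
  (#|A| == 3) &&
  [exists x in A, exists y in A, exists z in A, [&& E x y, E y z & E z x]].

Definition num_dtriangles (V : finType) (E : rel V) : nat :=
  #|[set A : {set V} | is_dtriangle E A]|.

From Stdlib Require Import Reals Lra ClassicalDescription.
From HB Require Import structures.
From mathcomp Require Import all_boot.

Set Implicit Arguments.
Unset Strict Implicit.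
Unset Printing Implicit Defensive.

(* On [0,1]^V let f(x) = sum_v x_v - sum_A prod_(v in A) x_v, the second sum
   ranging over the directed triangles A (f is [excess (dtriangles E)]).
   Since f is affine in each
   coordinate, it can be rounded one coordinate at a time to the indicator of
   a set S without decreasing, and f(1_S) = |S| - #(triangles inside S) is at
   most alpha(T): deleting one vertex of each such triangle leaves a set
   spanning no directed triangle, hence, in a tournament, no directed cycle.
   At the constant point p = sqrt(n/(3t)) we get f = np - tp^3 = (2/3)np. *)

Lemma small_transversal (T : finType) (F : {set {set T}}) :
  exists2 H : {set T}, #|H| <= #|F| &
    forall A, A \in F -> A != set0 -> ~~ [disjoint A & H].
Proof.
pose pickF := [set [pick x in A] | A : {set T} in F].
exists [set x | Some x \in pickF].
  rewrite -(card_imset _ (@Some_inj _)).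
  apply: leq_trans (leq_imset_card (fun A : {set T} => [pick x in A]) F).
  by apply/subset_leq_card/subsetP => _ /imsetP[x + ->]; rewrite inE.
move=> A AF /set0Pn[a aA].
have : [pick x in A] \in pickF by apply: imset_f.
case: pickP => [x xA pickF_x | /(_ a)]; last by rewrite aA.
by apply/negP => /disjointFr/(_ xA); rewrite inE pickF_x.
Qed.

Section Tournament.
Variables (V : finType) (E : rel V).
Hypothesis tourE : is_tournament E.

Definition dtriangles : {set {set V}} := [set A | is_dtriangle E A].

Lemma arc_neq x y : E x y -> x != y.
Proof. by case: tourE => irrE _ exy; apply: contraTneq exy => ->; apply: irrE. Qed.

Lemma arc_asym x y : E x y -> ~~ E y x.
Proof.
by case: tourE => _ totE exy; move: (totE x y (arc_neq exy)); rewrite exy andbF orbF.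
Qed.

Lemma arc_total x y : x != y -> ~~ E x y -> E y x.
Proof. by case: tourE => _ totE /totE; case: (E x y); case: (E y x). Qed.

Lemma dtriangle_of_arcs x y z :
  E x y -> E y z -> E z x -> is_dtriangle E [set x; y; z].
Proof.
move=> exy eyz ezx; apply/andP; split.
  rewrite -setUA !cardsU1 cards1 !inE negb_or.
  by rewrite (arc_neq exy) (arc_neq eyz) (eq_sym x z) (arc_neq ezx).
apply/existsP; exists x; rewrite !inE eqxx /=.
apply/existsP; exists y; rewrite !inE eqxx orbT /=.
by apply/existsP; exists z; rewrite !inE eqxx orbT exy eyz ezx.
Qed.

(* A chord z -> x of a directed cycle x -> y -> z -> ... closes a directed
   triangle; otherwise x -> z shortcuts the cycle. *)
Lemma directed_cycle_dtriangle s :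
  directed_cycle E s -> exists2 A, is_dtriangle E A & {subset A <= s}.
Proof.
have [n] := ubnP (size s); elim: n s => // n IH [|x [|y [|z r]]] //= lt_s.
- by rewrite /directed_cycle /= andbT; case: tourE => irrE _; rewrite (negbTE (irrE x)).
- by rewrite /directed_cycle /= => /and4P[_ /arc_asym/negbTE->].
rewrite /directed_cycle /= => /and4P[/and4P[x_yzr _ z_r uniq_r] exy eyz path_zr].
have [ezx | nezx] := boolP (E z x).
  exists [set x; y; z]; first exact: dtriangle_of_arcs.
  by move=> u; rewrite !inE -orbA => /or3P[] ->; rewrite ?orbT.
have zx : z != x by apply: contraNneq x_yzr => ->; rewrite !inE eqxx orbT.
have cyc_xzr : directed_cycle E [:: x, z & r].
  rewrite /directed_cycle /= z_r uniq_r (arc_total zx nezx) path_zr !andbT.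
  by move: x_yzr; rewrite !inE negb_or => /andP[_ ->].
have [|A tA sub_A] := IH _ _ cyc_xzr; first exact: lt_s.
by exists A => // u /sub_A; rewrite !inE => /or3P[] ->; rewrite ?orbT.
Qed.

Lemma acyclic_dtriangle_free (S : {set V}) :
  (forall A, is_dtriangle E A -> ~~ (A \subset S)) -> acyclic_set E S.
Proof.
move=> freeS s /allP sS; apply/negP => /directed_cycle_dtriangle [A tA sub_A].
by move/negP: (freeS A tA); apply; apply/subsetP => u /sub_A /sS.
Qed.

Lemma card_le_alpha_add_dtriangles (S : {set V}) :
  #|S| <= alpha E + #|[set A in dtriangles | A \subset S]|.
Proof.
set trS := [set A in dtriangles | _].
have [H le_H_trS hitH] := small_transversal trS.
have acyclic_SH : acyclic_set E (S :\: H).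
  apply: acyclic_dtriangle_free => A tA; rewrite subsetD negb_and.
  have [/eqP A3 _] := andP tA.
  case: (boolP (A \subset S)) => //= sub_AS.
  by apply: hitH; [rewrite !inE tA sub_AS | rewrite -card_gt0 A3].
have le_SH_alpha : #|S :\: H| <= alpha E.
  apply: (leq_bigmax_cond (P := acyclic_setb E) (F := fun B => #|B|)).
  by rewrite /acyclic_setb; case: excluded_middle_informative.
rewrite -[X in X <= _](cardsID H S) addnC leq_add // (leq_trans _ le_H_trS) //.
exact/subset_leq_card/subsetIr.
Qed.

End Tournament.

Open Scope R_scope.

Lemma RplusA : associative Rplus. Proof. by move=> *; rewrite Rplus_assoc. Qed.
Lemma RmultA : associative Rmult. Proof. by move=> *; rewrite Rmult_assoc. Qed.
HB.instance Definition _ := Monoid.isComLaw.Build R 0 Rplus RplusA Rplus_comm Rplus_0_l.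
HB.instance Definition _ := Monoid.isComLaw.Build R 1 Rmult RmultA Rmult_comm Rmult_1_l.

Lemma big_Rplus_affine [I : Type] [r : seq I] [P : pred I] [F F1 F0 : I -> R] [a] :
  (forall i, F i = a * F1 i + (1 - a) * F0 i) ->
  \big[Rplus/0]_(i <- r | P i) F i =
  a * \big[Rplus/0]_(i <- r | P i) F1 i + (1 - a) * \big[Rplus/0]_(i <- r | P i) F0 i.
Proof.
move=> affF; apply: (big_rec3 (fun y y1 y0 => y = a * y1 + (1 - a) * y0)); first ring.
by move=> i y y1 y0 _ ->; rewrite affF; ring.
Qed.

Lemma big_Rplus_const (I : finType) (A : {pred I}) c :
  \big[Rplus/0]_(i in A) c = INR #|A| * c.
Proof. by rewrite big_const; elim: #|A| => [|k IH]; rewrite ?S_INR /= ?IH; ring. Qed.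

Lemma big_Rmult_const (I : finType) (A : {pred I}) c :
  \big[Rmult/1]_(i in A) c = c ^ #|A|.
Proof. by rewrite big_const; elim: #|A| => //= k ->. Qed.

Section Excess.
Variables (V : finType) (F : {set {set V}}).

Definition excess (x : V -> R) : R :=
  \big[Rplus/0]_u x u - \big[Rplus/0]_(A in F) \big[Rmult/1]_(u in A) x u.

Definition update (x : V -> R) v a : V -> R := fun u => if u == v then a else x u.

Definition indicator (S : {set V}) : V -> R := fun u => if u \in S then 1 else 0.

Lemma eq_excess x y : x =1 y -> excess x = excess y.
Proof.
move=> eq_xy; rewrite /excess (eq_bigr y) => [|u _]; last exact: eq_xy.
by congr (_ - _); apply: eq_bigr => A _; apply: eq_bigr => u _.
Qed.

Lemma prod_update_affine x v (A : {set V}) :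
  \big[Rmult/1]_(u in A) x u =
  x v * \big[Rmult/1]_(u in A) update x v 1 u
  + (1 - x v) * \big[Rmult/1]_(u in A) update x v 0 u.
Proof.
have [vA | vNA] := boolP (v \in A).
  have split_v (f : V -> R) :
      \big[Rmult/1]_(u in A) f u = f v * \big[Rmult/1]_(u in A | u != v) f u.
    exact: bigD1.
  have off_v a : \big[Rmult/1]_(u in A | u != v) update x v a u =
                 \big[Rmult/1]_(u in A | u != v) x u.
    by apply: eq_bigr => u /andP[_ /negbTE uv]; rewrite /update uv.
  by rewrite !split_v !off_v /update eqxx; ring.
have off_v a : \big[Rmult/1]_(u in A) update x v a u = \big[Rmult/1]_(u in A) x u.
  by apply: eq_bigr => u uA; rewrite /update; case: eqP => // uv; rewrite -uv uA in vNA.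
by rewrite !off_v; ring.
Qed.

Lemma excess_affine x v :
  excess x = x v * excess (update x v 1) + (1 - x v) * excess (update x v 0).
Proof.
have update_affine u : x u = x v * update x v 1 u + (1 - x v) * update x v 0 u.
  by rewrite /update; case: eqP => [->|_]; ring.
rewrite /excess (big_Rplus_affine update_affine).
rewrite (big_Rplus_affine (prod_update_affine x v)).
(* The rewritten sums are only convertible to those of the right-hand side;
   naming them lets [ring] identify them. *)
set s1 := \big[Rplus/0]_u update x v 1 u; set s0 := \big[Rplus/0]_u update x v 0 u.
set p1 := \big[Rplus/0]_(A in F) _; set p0 := \big[Rplus/0]_(A in F) _.
ring.
Qed.

Lemma excess_le_update01 x v : 0 <= x v <= 1 ->
  excess x <= excess (update x v 0) \/ excess x <= excess (update x v 1).
Proof.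
move=> x01; rewrite (excess_affine x v).
by case: (Rle_dec (excess (update x v 0)) (excess (update x v 1))) => ?; [right | left]; nra.
Qed.

Lemma excess_round x : (forall u, 0 <= x u <= 1) ->
  exists S : {set V}, excess x <= excess (indicator S).
Proof.
suff round_on (l : seq V) : forall x, (forall u, 0 <= x u <= 1) ->
    (forall u, u \notin l -> x u = 0 \/ x u = 1) ->
    exists S : {set V}, excess x <= excess (indicator S).
  by move=> x01; apply: (round_on (enum V)) => // u; rewrite mem_enum.
elim: l => [|v l IH] {}x x01 x_bool.
  exists [set u | if Req_EM_T (x u) 1 then true else false].
  apply/Req_le/eq_excess => u; rewrite /indicator inE.
  by case: Req_EM_T => // ne1; case: (x_bool u).
have round_at a : a = 0 \/ a = 1 -> excess x <= excess (update x v a) ->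
    exists S : {set V}, excess x <= excess (indicator S).
  move=> a01 le_xa; have [|u|S le_aS] := IH (update x v a).
  - by move=> u; rewrite /update; case: eqP => // _; lra.
  - rewrite /update; case: eqP => // /eqP uv ul; apply: x_bool.
    by rewrite inE negb_or uv.
  by exists S; apply: Rle_trans le_aS.
by case: (excess_le_update01 (x01 v)); apply: round_at; [left | right].
Qed.

Lemma prod_indicator (S A : {set V}) :
  \big[Rmult/1]_(u in A) indicator S u = if A \subset S then 1 else 0.
Proof.
have [/subsetP subAS | /subsetPn[u uA uNS]] := boolP (A \subset S).
  by apply: big1 => u /subAS; rewrite /indicator => ->.
by rewrite (bigD1 u uA) /indicator (negbTE uNS) /= Rmult_0_l.
Qed.

Lemma excess_indicator (S : {set V}) :
  excess (indicator S) = INR #|S| - INR #|[set A in F | A \subset S]|.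
Proof.
have sum_indicator : \big[Rplus/0]_u indicator S u = INR #|S|.
  by rewrite -[RHS]Rmult_1_r -big_Rplus_const [RHS]big_mkcond.
have sum_subsets : \big[Rplus/0]_(A in F) (if A \subset S then 1 else 0) =
                   INR #|[set A in F | A \subset S]|.
  by rewrite -[RHS]Rmult_1_r -big_Rplus_const -big_mkcondr; apply: eq_bigl => A; rewrite inE.
rewrite /excess sum_indicator -sum_subsets.
by under eq_bigr => A _ do rewrite prod_indicator.
Qed.

Lemma excess_const k p : (forall A, A \in F -> #|A| = k) ->
  excess (fun _ => p) = INR #|V| * p - INR #|F| * p ^ k.
Proof.
move=> cardF; rewrite /excess [X in _ - X](eq_bigr (fun _ => p ^ k)).
  by rewrite !big_Rplus_const.
by move=> A /cardF <-; apply: big_Rmult_const.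
Qed.

End Excess.

Theorem mainTheorem4 (V : finType) (E : rel V) :
  is_tournament E ->
  (#|V| <= 3 * num_dtriangles E)%N ->
  2 / 3 * INR #|V| * sqrt (INR #|V| / (3 * INR (num_dtriangles E)))
    <= INR (alpha E).
Proof.
move=> tourE le_n_3t.
set n := #|V| in le_n_3t *; set t := num_dtriangles E in le_n_3t *.
have [t0 | t_gt0] := posnP t.
  have -> : INR n = 0 by move: le_n_3t; rewrite t0 muln0 leqn0 => /eqP ->.
  by rewrite Rmult_0_r Rmult_0_l; apply: pos_INR.
have tR : 0 < INR t by apply/lt_0_INR/ltP.
have nR : INR n <= 3 * INR t by rewrite -(INR_IZR_INZ 3) -mult_INR; apply/le_INR/leP.
set p := sqrt (INR n / (3 * INR t)).
have p0 : 0 <= p by apply: sqrt_pos.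
have pp : p * p * (3 * INR t) = INR n.
  rewrite sqrt_sqrt; first by field; lra.
  by apply: Rmult_le_pos; [apply: pos_INR | apply/Rlt_le/Rinv_0_lt_compat; lra].
have pp_le1 : p * p <= 1 by nra.
have p1 : p <= 1 by nra.
have [S le_pS] := excess_round (dtriangles E) (fun _ => conj p0 p1).
rewrite (excess_const (k := 3)) ?excess_indicator in le_pS; last first.
  by move=> A; rewrite inE => /andP[/eqP].
have t_p3 : INR t * p ^ 3 = INR n * p / 3.
  by rewrite -pp; field.
have := card_le_alpha_add_dtriangles tourE S => /leP/le_INR; rewrite plus_INR.
rewrite -[#|V|]/n -[#|dtriangles E|]/t in le_pS; lra.
Qed.
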